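(* Let $V$ be a set of $n=2^N$ nodes, let $\mathcal{N}_t$ be an $N$-dimensional hypercube on $V$ at time $t$, and let $\sigma_1,\dots,\sigma_{t-1}$ be the communication requests that occurred before time $t$. Then for every node $u\in V$ there exists a node $v\in V$, $v\neq u$, such that $$d_{Tree}(\mathcal{N}_t,(u,v))\ \ge\ \left\lceil \log_2 T_t(u,v)\right\rceil ,$$ where $T_t(u,v)$ is the working set number of the pair $(u,v)$ at time $t$ (i.e. computed as if $(u,v)$ were the request at time $t$).
   Context: Hypercube networks: $V$ is a set of $n=2^N$ nodes. An $N$-dimensional hypercube on $V$ is a bijection $\mathrm{Coord}:V\to\{0,1\}^N$; two nodes are linked iff their coordinates differ in exactly one bit. $\mathrm{Coord}_i(x)$ is the $i$-th bit. For $0\le d\le N$, the level-$d$ subtree $s^x_d$ of a node $x$ is the set of nodes whose coordinates agree with $\mathrm{Coord}(x)$ in the first $d$ bits (so $s^x_0=V$, $|s^x_d|=2^{N-d}$, $s^x_N=\{x\}$). The level-$d$ complementary subtree $\sim s^x_d$ ($1\le d\le N$) is $s^x_{d-1}\setminus s^x_d$. For nodes $u,v$, $L_{lca}(u,v)$ is the largest $\ell$ such that $u$ and $v$ lie in the same level-$\ell$ subtree (the length of the longest common prefix of their coordinates), and the tree distance is $d_{Tree}(\mathcal{N}_t,(u,v))=N-L_{lca}(u,v)$. Communications: a request sequence $\sigma=(\sigma_1,\dots,\sigma_m)$ with $\sigma_i=(u_i,v_i)\in V\times V$, $u_i\ne v_i$, request $\sigma_i$ occurring at time $i$; the network at time $i$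 is $\mathcal{N}_i$. For times $t'\le t$, the communication graph on $[t',t)$ is the simple undirected graph on vertex set $V$ with an edge $\{a,b\}$ for each request $(a,b)$ made at a time in $[t',t)$; $\mathcal{G}_x(t',t)$ denotes the connected component containing $x$ in it. Working set number $T_t(u,v)$ of a pair $(u,v)$ at time $t$: (i) if $u$ and $v$ communicated before time $t$, let $t'$ be the last such time; then $T_t(u,v)$ is the number of nodes of $\mathcal{G}_u(t',t)$; (ii) otherwise, let $V_u,V_v$ be the vertex sets of $\mathcal{G}_u(0,t)$ and $\mathcal{G}_v(0,t)$; if $v\in V_u$, then $T_t(u,v)=|V_u|$; if $v\notin V_u$, then $T_t(u,v)=\max(2^{d},|V_u|+|V_v|)$ where $d=d_{Tree}(\mathcal{N}_t,(u,v))$. *)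

From HB Require Import structures.
From mathcomp Require Import all_boot.
Set Implicit Arguments. Unset Strict Implicit. Unset Printing Implicit Defensive.

Section Hypercube.
Variables (V : finType) (N : nat) (Coord : V -> {ffun 'I_N -> bool}).

(* length of the longest common prefix of the coordinates of u and w:
   largest l <= N such that u and w agree on the first l bits
   (i.e. lie in the same level-l subtree) *)
Definition L_lca (u w : V) : nat :=
  \max_(l < N.+1 | [forall i : 'I_N, (i < l) ==> (Coord u i == Coord w i)]) l.

Definition dTree (u w : V) : nat := N - L_lca u w.

Definition commE (s : seq (V * V)) : rel V :=
  fun a b => ((a, b) \in s) || ((b, a) \in s).

Definition comp (s : seq (V * V)) (x : V) : {set V} :=
  [set y | connect (commE s) x y].

(* Working set number T_t(u,w), where s = [:: sigma_1; ...; sigma_{t-1}]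
   is the history of requests before time t (the k-th element, 0-based,
   occurred at time k+1). *)
Definition working_set (s : seq (V * V)) (u w : V) : nat :=
  let P := fun p : V * V => (p == (u, w)) || (p == (w, u)) in
  if has P s then
    (* requests at times in [t', t), t' = last time u and w communicated *)
    #|comp (drop (size s - (find P (rev s)).+1) s) u|
  else if w \in comp s u then #|comp s u|
  else maxn (2 ^ dTree u w) (#|comp s u| + #|comp s w|).

End Hypercube.

From Pilot Require Import Defs.
From HB Require Import structures.
From mathcomp Require Import all_boot.
Set Implicit Arguments. Unset Strict Implicit. Unset Printing Implicit Defensive.

(* Flip the first coordinate bit of u: since Coord is a
   bijection this gives a node w <> u lying in the other half of the
   hypercube, so the longest common prefix of u and w is empty and
   dTree u w = N.  On the other hand every working set number is at most
   #|V| = 2^N: in the first two cases it is the size of a connected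
   component, and in the third case it is the maximum of 2^dTree (at most
   2^N) and the total size of two disjoint components.  Hence
   up_log 2 (working_set s u w) <= N = dTree u w. *)

Section Hypercube.
Variables (V : finType) (N : nat) (Coord : V -> {ffun 'I_N -> bool}).

Lemma L_lca_le_diff_bit {u w : V} {i : 'I_N} :
  Coord u i != Coord w i -> L_lca Coord u w <= i.
Proof.
move=> neq_i; apply/bigmax_leqP => l /forallP agree.
rewrite leqNgt; apply/negP => lt_il.
by have := agree i; rewrite lt_il /= (negbTE neq_i).
Qed.

Lemma dTree_le_dim (u w : V) : dTree Coord u w <= N.
Proof. exact: leq_subr. Qed.

Lemma dTree_diff_first_bit (u w : V) {i : 'I_N} :
  i = 0 :> nat -> Coord u i != Coord w i -> dTree Coord u w = N.
Proof.
move=> i0 neq_i; have := L_lca_le_diff_bit neq_i.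
by rewrite i0 leqn0 /dTree => /eqP ->; rewrite subn0.
Qed.

(* The communication graph is undirected, so its components partition V:
   a node outside the component of u has a component disjoint from it. *)
Lemma comp_disjoint (s : seq (V * V)) (u w : V) :
  w \notin Defs.comp s u -> [disjoint Defs.comp s u & Defs.comp s w].
Proof.
move=> w_notin; have symE : symmetric (commE s).
  by move=> a b; rewrite /commE orbC.
apply/pred0P => x /=; apply/negbTE/negP => /andP [].
rewrite !inE => ux wx; move: w_notin; rewrite inE.
by rewrite (connect_trans ux) // (sym_connect_sym symE).
Qed.

Lemma working_set_le (s : seq (V * V)) (u w : V) :
  working_set Coord s u w <= maxn (2 ^ dTree Coord u w) #|V|.
Proof.
have le_cardV (A : {set V}) : #|A| <= maxn (2 ^ dTree Coord u w) #|V|.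
  by rewrite leq_max max_card orbT.
rewrite /working_set; case: ifP => _; first exact: le_cardV.
case: ifP => w_in; first exact: le_cardV.
rewrite geq_max leq_maxl -(cardsUI (Defs.comp s u) (Defs.comp s w)).
have/eqP -> : Defs.comp s u :&: Defs.comp s w == set0.
  by rewrite setI_eq0 comp_disjoint ?w_in.
by rewrite cards0 addn0 le_cardV.
Qed.

Lemma working_set_le_size (s : seq (V * V)) (u w : V) :
  #|V| = 2 ^ N -> working_set Coord s u w <= 2 ^ N.
Proof.
move=> cardV; apply: (leq_trans (working_set_le s u w)).
by rewrite geq_max cardV leqnn leq_pexp2l ?dTree_le_dim.
Qed.

Lemma exists_flip_neighbour (u : V) (i : 'I_N) :
  bijective Coord -> exists w : V, Coord u i != Coord w i.
Proof.
case=> g _ Cg; pose f := [ffun j => if j == i then ~~ Coord u j else Coord u j].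
by exists (g f); rewrite Cg ffunE eqxx; case: (Coord u i).
Qed.

End Hypercube.

Theorem mainTheorem1 (V : finType) (N : nat)
  (Coord : V -> {ffun 'I_N -> bool}) (s : seq (V * V)) :
  0 < N -> #|V| = 2 ^ N -> bijective Coord ->
  all (fun p : V * V => p.1 != p.2) s ->
  forall u : V, exists w : V,
    w != u /\ up_log 2 (working_set Coord s u w) <= dTree Coord u w.
Proof.
move=> N_gt0 cardV bijC _ u.
pose i0 : 'I_N := Ordinal N_gt0.
have [w neq_w] := exists_flip_neighbour u i0 bijC.
exists w; split; first by apply: contraNneq neq_w => ->.
rewrite (dTree_diff_first_bit (i:=i0)) //.
exact: up_log_min (working_set_le_size Coord s u w cardV).
Qed.
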